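(* Let $(\mathcal{A},\{\mu_n\}_{n\ge1})$ be an $A_\infty$-algebra and $\mathcal{N}:\mathcal{A}\to\mathcal{A}$ a strict homotopy Nijenhuis operator on it. For homogeneous $a_1,\dots,a_n$ and $S\subseteq\{1,\dots,n\}$ write $\mu_n^S(a_1,\dots,a_n)=\mu_n(c_1,\dots,c_n)$ with $c_i=a_i$ for $i\in S$ and $c_i=\mathcal{N}(a_i)$ for $i\notin S$. Define $\eta_n$ by $\eta_n([r];a_1,\dots,a_n)=\mu_n^{\{r\}}(a_1,\dots,a_n)$ for $1\le r\le n$, and, for $n\ge2$, $\eta_n([n+1];a_1,\dots,a_n)=\sum_{k=2}^n(-1)^{k-1}\mathcal{N}^{k-1}\big(\sum_{|S|=k}\mu_n^S(a_1,\dots,a_n)\big)$. Then $(\mathcal{A},\{\eta_n\}_{n\ge1})$ is an $NS_\infty$-algebra. As a consequence, $(\mathcal{A},\{\mu_{n,\mathcal{N}}\}_{n\ge1})$ is an $A_\infty$-algebra, where $\mu_{1,\mathcal{N}}=\mu_1$ and, for $n\ge2$, $\mu_{n,\mathcal{N}}(a_1,\dots,a_n)=\sum_{k=1}^n(-1)^{k-1}\mathcal{N}^{k-1}\big(\sum_{|S|=k}\mu_n^S(a_1,\dots,a_n)\big)$.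
   Context: Over a field of characteristic $0$. An $A_\infty$-algebra: graded vector space $\mathcal{A}$ with degree $n-2$ maps $\mu_n:\mathcal{A}^{\otimes n}\to\mathcal{A}$ such that for all $k\ge1$ and homogeneous $a_1,\dots,a_k$: $\sum_{m+n=k+1}\sum_{i=1}^m(-1)^{i(n+1)+n(|a_1|+\cdots+|a_{i-1}|)}\mu_m(a_1,\dots,a_{i-1},\mu_n(a_i,\dots,a_{i+n-1}),a_{i+n},\dots,a_k)=0$. A strict homotopy Nijenhuis operator is a degree $0$ linear $\mathcal{N}$ with $\mu_n(\mathcal{N}a_1,\dots,\mathcal{N}a_n)=\sum_{k=1}^n(-1)^{k-1}\mathcal{N}^k\big(\sum_{|S|=k}\mu_n^S(a_1,\dots,a_n)\big)$ for all $n\ge1$ and homogeneous $a_i$ (notation $\mu_n^S$ as in the claim). $NS_\infty$-algebras: let $C_n=\{[1],\dots,[n]\}$. $\mathcal{O}(1)=\mathrm{Hom}(\mathbf{k}[C_1]\otimes\mathcal{A},\mathcal{A})$, $\mathcal{O}(n)=\mathrm{Hom}(\mathbf{k}[C_{n+1}]\otimes\mathcal{A}^{\otimes n},\mathcal{A})$ ($n\ge2$); $C_1$, resp. $C_{n+1}$, is the index set of $\mathcal{O}(n)$. For $g\in\mathcal{O}(n)$, $g([*];-)$ is the sum of $g([j];-)$ over its index set and $g([j];-)=0$ for $[j]$ outside it. For $f\in\mathcal{O}(m)$, $g\in\mathcal{O}(n)$ (degrees $m-2$, $n-2$), $1\le i\le m$, homogeneous $a_1,\dots,a_{m+n-1}$,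 with $\varepsilon=(-1)^{n(|a_1|+\cdots+|a_{i-1}|)}$ and $\bar g_*=g([*];a_i,\dots,a_{i+n-1})$, $f\circ_ig\in\mathcal{O}(m+n-1)$ is $\varepsilon$ times: $f([r];a_1,\dots,a_{i-1},\bar g_*,a_{i+n},\dots)$ if $1\le r\le i-1$; $f([i];\dots,g([r-i+1];a_i,\dots,a_{i+n-1}),\dots)$ if $i\le r\le i+n-1$; $f([r-n+1];\dots,\bar g_*,\dots)$ if $i+n\le r\le m+n-1$; $f([i];\dots,g([n+1];a_i,\dots),\dots)+f([m+1];\dots,\bar g_*,\dots)$ if $r=m+n$. An $NS_\infty$-algebra is $(\mathcal{A},\{\eta_n\})$, $\eta_n\in\mathcal{O}(n)$ of degree $n-2$, with $\sum_{m+n=k+1}\sum_{i=1}^m(-1)^{i(n+1)}(\eta_m\circ_i\eta_n)([r];a_1,\dots,a_k)=0$ for all $k\ge1$, all $[r]$ in the index set of $\mathcal{O}(k)$, and homogeneous $a_i$. *)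

From HB Require Import structures.
From mathcomp Require Import all_boot all_order all_algebra.
Set Implicit Arguments. Unset Strict Implicit. Unset Printing Implicit Defensive.
Import Order.TTheory GRing.Theory Num.Theory.
Local Open Scope ring_scope.

Section Ainf.
Variables (K : fieldType) (V : lmodType K).

(* Grading: V = (+)_{d : int} A d, each A d a subspace, the sum being direct. *)
Definition graded (A : int -> {pred V}) : Prop :=
  [/\ (forall d, 0 \in A d /\
         forall (a : K) x y, x \in A d -> y \in A d -> a *: x + y \in A d),
      (forall (ds : seq int) (vs : seq V), uniq ds -> size vs = size ds ->
         (forall i, (i < size ds)%N -> nth 0 vs i \in A (nth 0%R ds i)) ->
         \sum_(v <- vs) v = 0 -> forall v, v \in vs -> v = 0) &
      (forall v : V, exists (ds : seq int) (vs : seq V), [/\ size vs = size ds,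
         (forall i, (i < size ds)%N -> nth 0 vs i \in A (nth 0%R ds i)) &
         v = \sum_(x <- vs) x])].

Definition homog (A : int -> {pred V}) (s : seq V) (ds : seq int) : Prop :=
  size s = size ds /\ forall i, (i < size s)%N -> nth 0 s i \in A (nth 0%R ds i).

Definition multilinear (n : nat) (f : seq V -> V) : Prop :=
  forall (s : seq V) (i : nat) (a : K) (x y : V), size s = n -> (i < n)%N ->
    f (set_nth 0 s i (a *: x + y)) = a *: f (set_nth 0 s i x) + f (set_nth 0 s i y).

Definition has_degree (A : int -> {pred V}) (n : nat) (e : int) (f : seq V -> V) :=
  forall (s : seq V) (ds : seq int), size s = n -> homog A s ds ->
    f s \in A (\sum_(d <- ds) d + e).

Definition sgn (z : int) : K := (-1) ^+ `|z|%N.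

Definition dsum (ds : seq int) (j : nat) : int := \sum_(d <- take j ds) d.

(* the list a_1..a_{i-1}, x, a_{i+n}, ... (i is 1-based) *)
Definition ins (s : seq V) (i n : nat) (x : V) : seq V :=
  take i.-1 s ++ x :: drop (i.-1 + n) s.
Definition mid (s : seq V) (i n : nat) : seq V := take n (drop i.-1 s).

Definition Ainf (A : int -> {pred V}) (mu : nat -> seq V -> V) : Prop :=
  [/\ forall n, (1 <= n)%N -> multilinear n (mu n),
      forall n, (1 <= n)%N -> has_degree A n (n%:Z - 2) (mu n) &
      forall (k : nat) (s : seq V) (ds : seq int), (1 <= k)%N -> size s = k ->
        homog A s ds ->
        \sum_(1 <= n < k.+1) \sum_(1 <= i < (k.+1 - n).+1)
           sgn ((i * n.+1)%N%:Z + n%:Z * dsum ds i.-1) *: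
           mu (k.+1 - n)%N (ins s i n (mu n (mid s i n))) = 0].

Variable (N : V -> V).

(* mu_n^S(a_1..a_n) with S a subset of {0..n-1} (0-based positions) *)
Definition muS (mu : nat -> seq V -> V) (n : nat) (S : {set 'I_n}) (s : seq V) : V :=
  mu n [seq (if i \in S then nth 0 s i else N (nth 0 s i)) | i <- enum 'I_n].

Definition sumS (mu : nat -> seq V -> V) (n k : nat) (s : seq V) : V :=
  \sum_(S : {set 'I_n} | #|S| == k) muS mu S s.

Definition strict_homotopy_Nijenhuis (A : int -> {pred V}) (mu : nat -> seq V -> V) : Prop :=
  [/\ linear N, (forall d x, x \in A d -> N x \in A d) &
      forall (n : nat) (s : seq V) (ds : seq int), (1 <= n)%N -> size s = n ->
        homog A s ds ->
        mu n (map N s) = \sum_(1 <= k < n.+1) sgn (k.-1) *: iter k N (sumS mu n k s)].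

(* eta_n([r]; a_1..a_n), r 1-based *)
Definition etaN (mu : nat -> seq V -> V) (n r : nat) (s : seq V) : V :=
  if (1 <= r <= n)%N then muS mu [set i : 'I_n | val i == r.-1] s
  else if (2 <= n)%N && (r == n.+1) then
    \sum_(2 <= k < n.+1) sgn (k.-1) *: iter k.-1 N (sumS mu n k s)
  else 0.

Definition muN (mu : nat -> seq V -> V) (n : nat) (s : seq V) : V :=
  if n == 1%N then mu 1%N s
  else \sum_(1 <= k < n.+1) sgn (k.-1) *: iter k.-1 N (sumS mu n k s).

End Ainf.

Section NSinf.
Variables (K : fieldType) (V : lmodType K).

(* size of the index set of O(n): C_1 for n = 1, C_{n+1} for n >= 2 *)
Definition nidx (n : nat) : nat := if n == 1%N then 1%N else n.+1.

Definition gv (eta : nat -> nat -> seq V -> V) (n r : nat) (s : seq V) : V :=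
  if (1 <= r <= nidx n)%N then eta n r s else 0.

Definition gstar (eta : nat -> nat -> seq V -> V) (n : nat) (s : seq V) : V :=
  \sum_(1 <= r < (nidx n).+1) eta n r s.

(* (eta_m o_i eta_n)([r]; a_1..a_{m+n-1}), ds the degrees *)
Definition compi (eta : nat -> nat -> seq V -> V) (m n i r : nat)
    (s : seq V) (ds : seq int) : V :=
  let f := gv eta m in
  let gs := gstar eta n (mid s i n) in
  sgn K (n%:Z * dsum ds i.-1) *:
  (if (r <= i.-1)%N then f r (ins s i n gs)
   else if (r <= i + n - 1)%N then f i (ins s i n (gv eta n (r - i + 1) (mid s i n)))
   else if (r <= m + n - 1)%N then f (r - n + 1)%N (ins s i n gs)
   else if r == (m + n)%N then
     f i (ins s i n (gv eta n n.+1 (mid s i n))) + f m.+1 (ins s i n gs)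
   else 0).

Definition NSinf (A : int -> {pred V}) (eta : nat -> nat -> seq V -> V) : Prop :=
  [/\ forall n r, (1 <= n)%N -> (1 <= r <= nidx n)%N -> multilinear n (eta n r),
      forall n r, (1 <= n)%N -> (1 <= r <= nidx n)%N -> has_degree A n (n%:Z - 2) (eta n r) &
      forall (k r : nat) (s : seq V) (ds : seq int), (1 <= k)%N -> (1 <= r <= nidx k)%N ->
        size s = k -> homog A s ds ->
        \sum_(1 <= n < k.+1) \sum_(1 <= i < (k.+1 - n).+1)
           sgn K ((i * n.+1)%N%:Z) *: compi eta (k.+1 - n) n i r s ds = 0].

End NSinf.

From HB Require Import structures.
From mathcomp Require Import all_boot all_order all_algebra zify.
Import Order.TTheory GRing.Theory Num.Theory.
Local Open Scope ring_scope.
Set Implicit Arguments. Unset Strict Implicit. Unset Printing Implicit Defensive.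

(* Encode a subset S of {1, ..., n} by the boolean mask b that is true on S, so that mu_n^S
   is mu_n applied to the arguments with N applied wherever b is false.  Then
   mu_{n,N} = sum_b (-1)^(|b|-1) N^(|b|-1) mu_n^b over nonempty masks, and the Nijenhuis
   identity says sum_b (-1)^|b| N^|b| mu_n^b = 0 over all masks, i.e.
   N (mu_{n,N} s) = mu_n (map N s).  Applied with one argument slot held fixed, the same
   identity lets N pass through the signed outer sum over the remaining masks; this shows
   that mu_{m,N} o_i mu_{n,N} is the sum over nonempty masks b of (-1)^(|b|-1) N^(|b|-1) applied to
   mu_m o_i mu_n at the b-twisted arguments.  Hence every A_infinity relation of mu_N is such
   a sum of A_infinity relations of mu.  For r <= k, the NS_infinity relation at [r] is
   the A_infinity relation of mu at the arguments twisted by the singleton {r}; summing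
   the NS_infinity relations over all [r] gives the A_infinity relation of
   mu_N = eta_*, which settles the remaining index [k+1]. *)

Lemma sgn_exprz (K : fieldType) (z : int) : sgn K z = (-1) ^ z.
Proof. by case: z => n //=; rewrite /sgn /exprz -signr_odd invr_sign -signr_odd. Qed.

Lemma sgnD (K : fieldType) (x y : int) : sgn K (x + y) = sgn K x * sgn K y.
Proof. by rewrite !sgn_exprz exprzDr // unitrN1. Qed.

Fixpoint masks (n : nat) : seq (seq bool) :=
  if n is n'.+1 then [seq true :: b | b <- masks n'] ++ [seq false :: b | b <- masks n']
  else [:: [::]].

Lemma mem_masks n b : (b \in masks n) = (size b == n).
Proof.
elim: n b => [|n IH] [|c b] //=; rewrite mem_cat; first by apply/negbTE/orP => -[] /mapP [].
have mem_cons c' : (c :: b \in [seq c' :: b' | b' <- masks n]) = (c == c') && (size b == n).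
  rewrite -IH; apply/mapP/andP => [[b' hb [-> ->]] | [/eqP -> hb]]; first by rewrite eqxx.
  by exists b.
by rewrite !mem_cons {mem_cons} eqSS; case: c; rewrite ?orbF.
Qed.

Lemma size_masks n b : b \in masks n -> size b = n.
Proof. by rewrite mem_masks => /eqP. Qed.

Lemma uniq_masks n : uniq (masks n).
Proof.
elim: n => [|n IH] //=; rewrite cat_uniq !map_inj_uniq; try by move=> ? ? [].
by rewrite IH /= andbT; apply/hasPn => _ /mapP [b _ ->]; apply/mapP => -[].
Qed.

Lemma count_cat_cons (t1 t3 : seq bool) (c : bool) :
  count id (t1 ++ c :: t3) = (c + count id (t1 ++ t3))%N.
Proof. by rewrite !count_cat /= addnCA. Qed.

Definition unit_mask (n r : nat) : seq bool := nseq r.-1 false ++ true :: nseq (n - r) false.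

Lemma size_unit_mask n r : (1 <= r <= n)%N -> size (unit_mask n r) = n.
Proof. by move=> hr; rewrite size_cat /= !size_nseq; lia. Qed.

Lemma nth_unit_mask n r j : (1 <= r <= n)%N -> nth false (unit_mask n r) j = (j == r.-1).
Proof.
move=> hr; rewrite nth_cat size_nseq; case: ltnP => hj; first by rewrite nth_nseq hj (ltn_eqF hj).
case E: (j - r.-1)%N => [|q] /=; first by rewrite eqn_leq hj -subn_eq0 E.
by rewrite nth_nseq if_same; apply/esym/eqP; lia.
Qed.

Lemma unit_mask_catr p q r : (1 <= r <= p)%N ->
  unit_mask (p + q) r = unit_mask p r ++ nseq q false.
Proof. by move=> hr; rewrite /unit_mask -catA /= -nseqD; congr (_ ++ _ :: nseq _ _); lia. Qed.

Lemma unit_mask_catl p q r : (1 <= r)%N ->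
  unit_mask (p + q) (p + r) = nseq p false ++ unit_mask q r.
Proof. by move=> hr; rewrite /unit_mask catA -nseqD subnDl; congr (nseq _ _ ++ _); lia. Qed.

Section MaskSums.
Variable W : nmodType.
Implicit Type F : seq bool -> W.

Lemma big_masksS n F :
  \sum_(b <- masks n.+1) F b =
  \sum_(b <- masks n) F (true :: b) + \sum_(b <- masks n) F (false :: b).
Proof. by rewrite /= big_cat !big_map. Qed.

Lemma big_masks_cat p q F :
  \sum_(b <- masks (p + q)) F b = \sum_(b1 <- masks p) \sum_(b2 <- masks q) F (b1 ++ b2).
Proof. by elim: p F => [|p IH] F; rewrite ?big_seq1 // addSn !big_masksS !IH. Qed.

Lemma big_masks_slot p q F :
  \sum_(b <- masks (p + q).+1) F b =
  \sum_(t1 <- masks p) \sum_(t3 <- masks q) (F (t1 ++ true :: t3) + F (t1 ++ false :: t3)).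
Proof. by rewrite -addnS big_masks_cat; apply: eq_bigr => t1 _; rewrite big_masksS big_split. Qed.

Lemma big_masks_count0 n F :
  \sum_(b <- masks n | count id b == 0%N) F b = F (nseq n false).
Proof.
elim: n F => [|n IH] F; rewrite big_mkcond ?big_seq1 //.
by rewrite big_masksS big1 ?add0r // -big_mkcond (IH (fun b => F (false :: b))).
Qed.

Lemma big_masks_split0 n F :
  \sum_(b <- masks n) F b = F (nseq n false) + \sum_(b <- masks n | (0 < count id b)%N) F b.
Proof.
rewrite (bigID (fun b => count id b == 0%N)) big_masks_count0.
by under [in X in _ + X]eq_bigl => b do rewrite lt0n.
Qed.

Lemma big_unit_masks n F :
  \sum_(1 <= r < n.+1) F (unit_mask n r) = \sum_(b <- masks n | count id b == 1%N) F b.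
Proof.
elim: n F => [|n IH] F; first by rewrite big_geq // big_mkcond big_seq1.
rewrite [RHS]big_mkcond big_masksS -!big_mkcond /=.
rewrite big_masks_count0 -(IH (fun b => F (false :: b))).
rewrite big_ltn // big_add1 /unit_mask subn1; congr (_ + _).
by apply: eq_big_nat => -[|r] // _; rewrite subSS.
Qed.

End MaskSums.

Lemma set_nth_size_cat (T : Type) (x0 y z : T) (l1 l3 : seq T) :
  set_nth x0 (l1 ++ y :: l3) (size l1) z = l1 ++ z :: l3.
Proof. by elim: l1 => //= x l1 ->. Qed.

Section MultilinearSlot.
Variables (K : fieldType) (V : lmodType K) (m : nat) (F : seq V -> V) (l1 l3 : seq V).
Hypotheses (F_ml : multilinear m F) (size_l : (size l1 + size l3).+1 = m).

Lemma slot_linear : linear (fun x => F (l1 ++ x :: l3)).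
Proof.
move=> a x y; have := F_ml (s := l1 ++ 0 :: l3) (i := size l1) a x y.
by rewrite !set_nth_size_cat; apply; rewrite ?size_cat /=; lia.
Qed.

Let slot : {linear V -> V} :=
  HB.pack (fun x => F (l1 ++ x :: l3)) (GRing.isLinear.Build K V V *:%R _ slot_linear).

Lemma slot_sum (I : Type) (r : seq I) (P : pred I) (G : I -> V) :
  F (l1 ++ (\sum_(j <- r | P j) G j) :: l3) = \sum_(j <- r | P j) F (l1 ++ G j :: l3).
Proof. exact: (linear_sum slot). Qed.

End MultilinearSlot.

Section Homogeneous.
Variables (K : fieldType) (V : lmodType K) (A : int -> {pred V}).

Lemma homog_cat s1 s2 d1 d2 : homog A s1 d1 -> homog A s2 d2 -> homog A (s1 ++ s2) (d1 ++ d2).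
Proof.
move=> [e1 h1] [e2 h2]; split=> [|p]; first by rewrite !size_cat e1 e2.
by rewrite size_cat !nth_cat e1 => hp; case: ltnP => hp1; [apply: h1 | apply: h2]; lia.
Qed.

Lemma homog_take s ds p : homog A s ds -> homog A (take p s) (take p ds).
Proof.
move=> [e h]; split=> [|q]; first by rewrite !size_take e.
rewrite size_take => hq; rewrite !nth_take; first apply: h.
all: by move: hq; case: (ltnP p (size s)); lia.
Qed.

Lemma homog_drop s ds p : homog A s ds -> homog A (drop p s) (drop p ds).
Proof.
move=> [e h]; split=> [|q]; first by rewrite !size_drop e.
by rewrite size_drop => hq; rewrite !nth_drop; apply: h; lia.
Qed.

Lemma homog_slot l1 y l3 d1 d d3 : homog A l1 d1 -> y \in A d -> homog A l3 d3 ->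
  homog A (l1 ++ y :: l3) (d1 ++ d :: d3).
Proof.
move=> h1 hy [e3 h3]; apply: homog_cat => //.
by split=> [|[_|q]] /=; [rewrite e3 | exact: hy | rewrite ltnS; exact: h3].
Qed.

Lemma homog_mid s ds i n : homog A s ds -> homog A (mid s i n) (take n (drop i.-1 ds)).
Proof. by move=> h; apply/homog_take/homog_drop. Qed.

End Homogeneous.

Section Twist.
Variables (K : fieldType) (V : lmodType K) (N : V -> V).

Definition twist (b : seq bool) (s : seq V) : seq V :=
  [seq if p.1 then p.2 else N p.2 | p <- zip b s].

Lemma size_twist b s : size (twist b s) = minn (size b) (size s).
Proof. by rewrite size_map size_zip. Qed.

Lemma size_twist_eq b s : size b = size s -> size (twist b s) = size s.
Proof. by move=> hb; rewrite size_twist hb minnn. Qed.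

Lemma nth_twist b s j : (j < size b)%N -> (j < size s)%N ->
  nth 0 (twist b s) j = if nth false b j then nth 0 s j else N (nth 0 s j).
Proof.
move=> hb hs; rewrite (nth_map (false, 0)) ?size_zip ?leq_min ?hb ?hs //.
by rewrite nth_zip_cond size_zip leq_min hb hs.
Qed.

Lemma twist_cat b1 b2 s1 s2 : size b1 = size s1 ->
  twist (b1 ++ b2) (s1 ++ s2) = twist b1 s1 ++ twist b2 s2.
Proof. by move=> h; rewrite /twist zip_cat // map_cat. Qed.

Lemma twist_nseq_false n s : size s = n -> twist (nseq n false) s = map N s.
Proof. by move=> <-; rewrite /twist; elim: s => //= x s ->. Qed.

Lemma twist_set_nth b s j x : size b = size s -> (j < size s)%N ->
  twist b (set_nth 0 s j x) = set_nth 0 (twist b s) j (if nth false b j then x else N x).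
Proof.
move=> hb hj; apply: (@eq_from_nth _ 0) => [|q].
  by rewrite size_twist !size_set_nth size_twist hb; lia.
rewrite size_twist size_set_nth hb leq_min => /andP[hq _].
rewrite nth_twist ?size_set_nth ?hb ?leq_max ?hq ?orbT //.
by rewrite !nth_set_nth /= nth_twist ?hb //; case: eqP => // ->.
Qed.

Definition set_mask n (S : {set 'I_n}) : seq bool := [seq i \in S | i <- enum 'I_n].

Lemma size_set_mask n (S : {set 'I_n}) : size (set_mask S) = n.
Proof. by rewrite size_map size_enum_ord. Qed.

Lemma nth_set_mask n (S : {set 'I_n}) (j : 'I_n) : nth false (set_mask S) j = (j \in S).
Proof. by rewrite (nth_map j) ?size_enum_ord // nth_ord_enum. Qed.

Lemma count_set_mask n (S : {set 'I_n}) : count id (set_mask S) = #|S|.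
Proof.
by rewrite count_map enumT cardE /enum_mem size_filter; apply: eq_count.
Qed.

Lemma muS_twist mu n (S : {set 'I_n}) s : size s = n ->
  muS N mu S s = mu n (twist (set_mask S) s).
Proof.
move=> hs; rewrite /muS /twist /set_mask; congr (mu n _).
have enum_s : s = [seq nth 0 s (val i) | i <- enum 'I_n].
  by rewrite (map_comp (nth 0 s) val) val_enum_ord -hs -/(mkseq _ _) mkseq_nth.
by rewrite [X in zip _ X]enum_s zip_map -map_comp.
Qed.

Lemma big_set_masks (W : nmodType) n (F : seq bool -> W) :
  \sum_(S : {set 'I_n}) F (set_mask S) = \sum_(b <- masks n) F b.
Proof.
rewrite -(big_map (@set_mask n) xpredT F); apply/perm_big/uniq_perm.
- rewrite map_inj_uniq ?index_enum_uniq // => S1 S2 eqS; apply/setP => i.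
  by rewrite -!nth_set_mask eqS.
- exact: uniq_masks.
move=> b; rewrite mem_masks; apply/mapP/eqP => [[S _ ->] | hb]; first exact: size_set_mask.
exists [set i : 'I_n | nth false b i]; first by rewrite mem_index_enum.
apply: (@eq_from_nth _ false) => [|j]; rewrite ?size_set_mask hb // => hj.
by rewrite -[j]/(val (Ordinal hj)) nth_set_mask inE.
Qed.

Lemma set_mask_unit n r : (1 <= r <= n)%N ->
  set_mask [set i : 'I_n | val i == r.-1] = unit_mask n r.
Proof.
move=> hr; apply: (@eq_from_nth _ false) => [|j]; rewrite size_set_mask ?size_unit_mask // => hj.
by rewrite -[j]/(val (Ordinal hj)) nth_set_mask inE nth_unit_mask.
Qed.

Lemma size_ins (s : seq V) i n y : (i.-1 + n <= size s)%N -> size (ins s i n y) = (size s - n).+1.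
Proof. by move=> h; rewrite size_cat /= size_takel ?size_drop; lia. Qed.

Lemma size_mid (s : seq V) i n : (i.-1 + n <= size s)%N -> size (mid s i n) = n.
Proof. by move=> h; rewrite size_takel // size_drop; lia. Qed.

Section Split.
Variables (s : seq V) (i n : nat).
Hypothesis hs : (i.-1 + n <= size s)%N.

Let size_take_s : size (take i.-1 s) = i.-1.
Proof. by rewrite size_takel //; lia. Qed.

Lemma twist_split3 t1 u t3 : size t1 = i.-1 -> size u = n ->
  twist (t1 ++ u ++ t3) s =
  twist t1 (take i.-1 s) ++ twist u (mid s i n) ++ twist t3 (drop (i.-1 + n) s).
Proof.
move=> h1 hu; rewrite -{1}(cat_take_drop i.-1 s) -{1}(cat_take_drop n (drop i.-1 s)).
by rewrite drop_drop addnC twist_cat ?twist_cat // ?size_take_s ?size_takel // size_drop; lia.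
Qed.

Lemma ins_twist t1 u t3 x : size t1 = i.-1 -> size u = n ->
  ins (twist (t1 ++ u ++ t3) s) i n x =
  twist t1 (take i.-1 s) ++ x :: twist t3 (drop (i.-1 + n) s).
Proof.
move=> h1 hu; have e1 : size (twist t1 (take i.-1 s)) = i.-1.
  by rewrite size_twist size_take_s h1 minnn.
have e2 : size (twist u (mid s i n)) = n by rewrite size_twist size_mid // hu minnn.
by rewrite twist_split3 // /ins take_size_cat // catA drop_size_cat // size_cat e1 e2.
Qed.

Lemma mid_twist t1 u t3 : size t1 = i.-1 -> size u = n ->
  mid (twist (t1 ++ u ++ t3) s) i n = twist u (mid s i n).
Proof.
move=> h1 hu; have e1 : size (twist t1 (take i.-1 s)) = i.-1.
  by rewrite size_twist size_take_s h1 minnn.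
have e2 : size (twist u (mid s i n)) = n by rewrite size_twist size_mid // hu minnn.
by rewrite twist_split3 // /mid drop_size_cat // take_size_cat.
Qed.

Lemma twist_ins t1 (c : bool) t3 y : size t1 = i.-1 ->
  twist (t1 ++ c :: t3) (ins s i n y) =
  twist t1 (take i.-1 s) ++ (if c then y else N y) :: twist t3 (drop (i.-1 + n) s).
Proof. by move=> h1; rewrite /ins twist_cat ?size_take_s. Qed.

Lemma twist_ins_split t1 (c : bool) u t3 y : size t1 = i.-1 -> size u = n ->
  twist (t1 ++ c :: t3) (ins s i n y) = ins (twist (t1 ++ u ++ t3) s) i n (if c then y else N y).
Proof. by move=> h1 hu; rewrite twist_ins // ins_twist. Qed.

End Split.

Lemma homog_twist (A : int -> {pred V}) b s ds : (forall d x, x \in A d -> N x \in A d) ->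
  size b = size s -> homog A s ds -> homog A (twist b s) ds.
Proof.
move=> hN hb [e h]; split=> [|q]; first by rewrite size_twist hb minnn.
rewrite size_twist hb minnn => hq; rewrite nth_twist ?hb //.
by case: ifP => _; [apply: h | apply/hN/h].
Qed.

End Twist.

Lemma big_nat_addn (W : nmodType) a b p (F : nat -> W) :
  \sum_(a + p <= r < b + p) F r = \sum_(a <= r < b) F (r + p)%N.
Proof. by rewrite big_addn addnK. Qed.

Lemma mem_nidx n r : (1 <= n)%N -> (1 <= r <= nidx n)%N ->
  (1 <= r <= n)%N \/ (2 <= n)%N /\ r = n.+1.
Proof. by rewrite /nidx; case: eqP => ? h1 h2; lia. Qed.

Section Composition.
Variables (K : fieldType) (V : lmodType K) (eta : nat -> nat -> seq V -> V).
Variables (m n i : nat) (s : seq V) (ds : seq int).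
Hypotheses (n_gt0 : (0 < n)%N) (i_gt0 : (0 < i)%N).
Local Notation eps := (sgn K (n%:Z * dsum ds i.-1)).
Local Notation gs := (gstar eta n (mid s i n)).

Lemma gv_in k r x : (1 <= r <= nidx k)%N -> gv eta k r x = eta k r x.
Proof. by rewrite /gv => ->. Qed.

Lemma big_gv k x : \sum_(1 <= r < k.+2) gv eta k r x = gstar eta k x.
Proof.
rewrite /gstar /gv /nidx; case: eqP => [-> | _]; last by apply: eq_big_nat => r ->.
by rewrite big_nat_recr //= !big_nat1 addr0.
Qed.

Lemma compi_lt r : (r < i)%N -> compi eta m n i r s ds = eps *: gv eta m r (ins s i n gs).
Proof. by move=> hr; rewrite /compi ifT //; lia. Qed.

Lemma compi_mid r : (i <= r < i + n)%N ->
  compi eta m n i r s ds = eps *: gv eta m i (ins s i n (gv eta n (r - i + 1) (mid s i n))).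
Proof. by move=> hr; rewrite /compi; case: ifP => h; [lia | rewrite ifT //; lia]. Qed.

Lemma compi_gt r : (i + n <= r < m + n)%N ->
  compi eta m n i r s ds = eps *: gv eta m (r - n + 1) (ins s i n gs).
Proof.
move=> hr; rewrite /compi; case: ifP => h1; first lia.
by case: ifP => h2; [lia | rewrite ifT //; lia].
Qed.

Lemma compi_last : (i <= m)%N -> compi eta m n i (m + n) s ds =
  eps *: (gv eta m i (ins s i n (gv eta n n.+1 (mid s i n))) + gv eta m m.+1 (ins s i n gs)).
Proof.
move=> hi; rewrite /compi; case: ifP => h1; first lia.
by case: ifP => h2; first lia; case: ifP => h3; [lia | rewrite eqxx].
Qed.

Lemma big_compi : (i <= m)%N -> multilinear m (eta m i) -> size s = (m + n).-1 ->
  \sum_(1 <= r < (m + n).+1) compi eta m n i r s ds = eps *: gstar eta m (ins s i n gs).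
Proof.
move=> hi hml hs.
have gv_i x : gv eta m i x = eta m i x by rewrite gv_in // /nidx; case: eqP; lia.
have slot_i : gv eta m i (ins s i n gs) =
    \sum_(1 <= j < n.+2) gv eta m i (ins s i n (gv eta n j (mid s i n))).
  have size_l : (size (take i.-1 s) + size (drop (i.-1 + n) s)).+1 = m.
    by rewrite size_takel ?size_drop; lia.
  by rewrite gv_i -big_gv /ins (slot_sum hml size_l); apply: eq_bigr => j _; rewrite gv_i.
have mid_sum : \sum_(i <= r < i + n) gv eta m i (ins s i n (gv eta n (r - i + 1) (mid s i n))) =
    \sum_(1 <= j < n.+1) gv eta m i (ins s i n (gv eta n j (mid s i n))).
  rewrite -{1}[i]add0n big_addn addKn big_add1 /=.
  by apply: eq_big_nat => r _; rewrite addnK addn1.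
have gt_sum : \sum_(i + n <= r < m + n) gv eta m (r - n + 1) (ins s i n gs) =
    \sum_(i.+1 <= r < m.+1) gv eta m r (ins s i n gs).
  have -> : (i + n = i.+1 + n.-1)%N by lia.
  have -> : (m + n = m.+1 + n.-1)%N by lia.
  by rewrite big_nat_addn; apply: eq_big_nat => r /andP[hr _]; congr gv; lia.
have le_imn : (i <= i + n)%N by rewrite leq_addr.
have le_inmn : (i + n <= m + n)%N by rewrite leq_add2r.
rewrite big_nat_recr ?(leq_trans i_gt0 (leq_trans le_imn le_inmn)) //=.
rewrite (big_cat_nat i_gt0 (leq_trans le_imn le_inmn)) (big_cat_nat le_imn le_inmn) /=.
rewrite (eq_big_nat _ _ (fun r hr => compi_lt (andP hr).2)).
rewrite (eq_big_nat _ _ (fun r hr => compi_mid hr)) (eq_big_nat _ _ (fun r hr => compi_gt hr)).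
rewrite compi_last // -!scaler_sumr -!scalerDr.
rewrite mid_sum gt_sum; congr (_ *: _).
rewrite -[gstar eta m _]big_gv [RHS]big_nat_recr //=.
rewrite [in RHS](big_cat_nat i_gt0 (leqW hi)) /=.
rewrite [\sum_(i <= r < m.+1) _]big_ltn ?ltnS // slot_i [\sum_(1 <= j < n.+2) _]big_nat_recr //=.
by rewrite !addrA (addrAC _ (\sum_(i.+1 <= r < m.+1) _)).
Qed.

End Composition.

Section Closure.
Variables (K : fieldType) (V : lmodType K) (A : int -> {pred V}) (n : nat).
Implicit Types F G : seq V -> V.

Lemma multilinear_ext F G : multilinear n F -> (forall s, size s = n -> G s = F s) ->
  multilinear n G.
Proof. by move=> hF e s p a x y hs hp; rewrite !e ?hF // size_set_nth hs; lia. Qed.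

Lemma multilinear_sum (I : eqType) (r : seq I) (F : I -> seq V -> V) :
  (forall c, c \in r -> multilinear n (F c)) -> multilinear n (fun s => \sum_(c <- r) F c s).
Proof.
move=> hF s p a x y hs hp; rewrite scaler_sumr -big_split.
by apply: eq_big_seq => c hc; rewrite hF.
Qed.

Lemma multilinear_comp (f : V -> V) F : linear f -> multilinear n F ->
  multilinear n (fun s => f (F s)).
Proof. by move=> hf hF s p a x y hs hp; rewrite hF // hf. Qed.

Lemma has_degree_ext e F G : has_degree A n e F -> (forall s, size s = n -> G s = F s) ->
  has_degree A n e G.
Proof. by move=> hF eFG s ds hs hom; rewrite eFG //; apply: hF. Qed.

Lemma has_degree_comp e (f : V -> V) F : (forall d x, x \in A d -> f x \in A d) ->
  has_degree A n e F -> has_degree A n e (fun s => f (F s)).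
Proof. by move=> hf hF s ds hs hom; apply/hf/hF. Qed.

Hypothesis A_graded : graded A.

Lemma graded_lin d a x y : x \in A d -> y \in A d -> a *: x + y \in A d.
Proof. by case: A_graded => h _ _; case: (h d) => _; apply. Qed.

Lemma graded0 d : 0 \in A d.
Proof. by case: A_graded => h _ _; case: (h d). Qed.

Lemma has_degree_sum e (I : eqType) (r : seq I) (F : I -> seq V -> V) :
  (forall c, c \in r -> has_degree A n e (F c)) ->
  has_degree A n e (fun s => \sum_(c <- r) F c s).
Proof.
move=> hF s ds hs hom; rewrite big_seq; elim/big_ind: _ => [|x y hx hy|c hc]; last exact: hF.
- exact: graded0.
- by rewrite -[x]scale1r; apply: graded_lin.
Qed.

End Closure.

Section Expansion.
Variables (K : fieldType) (V : lmodType K) (N : V -> V) (mu : nat -> seq V -> V).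
Hypothesis N_linear : linear N.
Local Notation twist := (twist N).

HB.instance Definition _ := GRing.isLinear.Build K V V *:%R N N_linear.

Lemma iter_linear j : linear (iter j N).
Proof. by elim: j => [|j IH] a x y //=; rewrite IH linearP. Qed.

HB.instance Definition _ j := GRing.isLinear.Build K V V *:%R (iter j N) (iter_linear j).

(* The contribution of a subset of size k = count id b to mu_{n,N} (lo = 1) and to
   eta_n([n+1]) (lo = 2). *)
Definition Nterm (lo : nat) (b : seq bool) (x : V) : V :=
  if (lo <= count id b)%N then sgn K (count id b).-1 *: iter (count id b).-1 N x else 0.

Lemma Nterm_linear lo b : linear (Nterm lo b).
Proof.
move=> a x y; rewrite /Nterm; case: ifP => _; last by rewrite scaler0 addr0.
by rewrite linearP scalerDr !scalerA mulrC.
Qed.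

HB.instance Definition _ lo b := GRing.isLinear.Build K V V *:%R (Nterm lo b) (Nterm_linear lo b).

Lemma Nterm1E b x : Nterm 1 b x = (if count id b == 1%N then x else 0) + Nterm 2 b x.
Proof. by rewrite /Nterm; case: (count id b) => [|[|c]]; rewrite ?scale1r ?addr0 ?add0r. Qed.

Lemma Nterm_nseq n x : Nterm 1 (nseq n false) x = 0.
Proof. by rewrite /Nterm count_nseq mul0n. Qed.

Lemma sumS_masks n k s : size s = n ->
  sumS N mu n k s = \sum_(b <- masks n | count id b == k) mu n (twist b s).
Proof.
move=> hs; rewrite /sumS big_mkcond [RHS]big_mkcond -big_set_masks.
by apply: eq_bigr => S _; rewrite count_set_mask muS_twist.
Qed.

Lemma big_sumS_weight n lo (c : nat -> K) (e : nat -> nat) s : size s = n ->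
  \sum_(lo <= k < n.+1) c k *: iter (e k) N (sumS N mu n k s) =
  \sum_(b <- masks n | (lo <= count id b)%N)
    c (count id b) *: iter (e (count id b)) N (mu n (twist b s)).
Proof.
move=> hs; under eq_bigr => k _ do rewrite sumS_masks // big_mkcond linear_sum scaler_sumr.
rewrite exchange_big [RHS]big_mkcond /=; apply: eq_big_seq => b hb.
transitivity (\sum_(lo <= k < n.+1 | k == count id b) c k *: iter (e k) N (mu n (twist b s))).
  rewrite [RHS]big_mkcond; apply: eq_bigr => k _; rewrite eq_sym.
  by case: eqP => // _; rewrite linear0 scaler0.
by rewrite big_nat1_eq ltnS -(size_masks hb) count_size andbT.
Qed.

Lemma muN_sumS n s : (1 <= n)%N -> size s = n ->
  muN N mu n s = \sum_(1 <= k < n.+1) sgn K (k.-1)%:Z *: iter k.-1 N (sumS N mu n k s).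
Proof.
move=> hn hs; rewrite /muN; case: eqP => // n1; move: hs; rewrite n1.
case: s => [|x [|//]] // _.
by rewrite big_nat1 scale1r sumS_masks //= !big_cons big_nil /= addr0.
Qed.

Lemma muN_masks n s : (1 <= n)%N -> size s = n ->
  muN N mu n s = \sum_(b <- masks n) Nterm 1 b (mu n (twist b s)).
Proof. by move=> hn hs; rewrite muN_sumS // big_sumS_weight // big_mkcond. Qed.

Lemma etaN_unit n r s : (1 <= r <= n)%N -> size s = n ->
  etaN N mu n r s = mu n (twist (unit_mask n r) s).
Proof. by move=> hr hs; rewrite /etaN hr muS_twist // set_mask_unit. Qed.

Lemma etaN_last n s : (2 <= n)%N -> size s = n ->
  etaN N mu n n.+1 s = \sum_(b <- masks n) Nterm 2 b (mu n (twist b s)).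
Proof.
move=> hn hs; rewrite /etaN ltnn andbF hn eqxx /=.
by rewrite big_sumS_weight // big_mkcond.
Qed.

Lemma gstar_etaN n s : (1 <= n)%N -> size s = n -> gstar (etaN N mu) n s = muN N mu n s.
Proof.
rewrite /gstar /nidx; case: eqP => [-> _ hs | /eqP n1 hn hs].
  by rewrite big_nat1 etaN_unit //; case: s hs => [|x [|]].
have hn2 : (2 <= n)%N by lia.
rewrite big_nat_recr //= etaN_last // muN_masks //.
under eq_big_nat => r hr do rewrite etaN_unit //.
rewrite (big_unit_masks n (fun b => mu n (twist b s))) big_mkcond -big_split /=.
by apply: eq_bigr => b _; rewrite Nterm1E.
Qed.

Definition twisted_slot m (l1 l3 : seq V) (v : V) : V :=
  \sum_(t1 <- masks (size l1)) \sum_(t3 <- masks (size l3))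
    sgn K (count id (t1 ++ t3)) *: iter (count id (t1 ++ t3)) N
      (mu m (twist t1 l1 ++ v :: twist t3 l3)).

Section Nijenhuis.
Variable A : int -> {pred V}.
Hypotheses (A_graded : graded A) (mu_Ainf : Ainf A mu).
Hypothesis HNij : strict_homotopy_Nijenhuis N A mu.

Let mu_multilinear n : (1 <= n)%N -> multilinear n (mu n).
Proof. by case: mu_Ainf => h _ _; apply: h. Qed.

Let mu_rel k s ds : (1 <= k)%N -> size s = k -> homog A s ds ->
  \sum_(1 <= n < k.+1) \sum_(1 <= i < (k.+1 - n).+1)
     sgn K ((i * n.+1)%N%:Z + n%:Z * dsum ds i.-1) *:
     mu (k.+1 - n)%N (ins s i n (mu n (mid s i n))) = 0.
Proof. by case: mu_Ainf => _ _; apply. Qed.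

Let mu_degree n : (1 <= n)%N -> has_degree A n (n%:Z - 2) (mu n).
Proof. by case: mu_Ainf => _ h _; apply: h. Qed.

Lemma N_homog d x : x \in A d -> N x \in A d.
Proof. by case: HNij => _ h _; apply: h. Qed.

Lemma iter_homog j d x : x \in A d -> iter j N x \in A d.
Proof. by move=> hx; elim: j => //= j; apply: N_homog. Qed.

Lemma Nterm_homog lo b d x : x \in A d -> Nterm lo b x \in A d.
Proof.
move=> hx; rewrite /Nterm; case: ifP => _; last exact: graded0.
rewrite -[_ *: _]addr0; apply: (graded_lin A_graded); [exact: iter_homog | exact: graded0].
Qed.

Lemma multilinear_twist n b : (1 <= n)%N -> size b = n ->
  multilinear n (fun s => mu n (twist b s)).
Proof.
move=> hn hb s p a x y hs hp /=.
have [hbs hps] : size b = size s /\ (p < size s)%N by rewrite hb hs.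
rewrite !(twist_set_nth N _ hbs hps).
have hts : size (twist b s) = n by rewrite (size_twist_eq N hbs).
by case: ifP => _; rewrite ?linearP (mu_multilinear hn).
Qed.

Lemma has_degree_twist n b : (1 <= n)%N -> size b = n ->
  has_degree A n (n%:Z - 2) (fun s => mu n (twist b s)).
Proof.
move=> hn hb s ds hs hom /=; have hbs : size b = size s by rewrite hb hs.
by apply: (mu_degree hn); [rewrite (size_twist_eq N hbs) | apply: homog_twist N_homog hbs hom].
Qed.

Lemma multilinear_masks lo n : (1 <= n)%N ->
  multilinear n (fun s => \sum_(b <- masks n) Nterm lo b (mu n (twist b s))).
Proof.
move=> hn; apply: multilinear_sum => b hb.
by apply: (multilinear_comp (Nterm_linear lo b)); apply: multilinear_twist (size_masks hb).
Qed.

Lemma has_degree_masks lo n : (1 <= n)%N ->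
  has_degree A n (n%:Z - 2) (fun s => \sum_(b <- masks n) Nterm lo b (mu n (twist b s))).
Proof.
move=> hn; apply: has_degree_sum => // b hb.
by apply: (has_degree_comp (@Nterm_homog lo b)); apply: has_degree_twist (size_masks hb).
Qed.

Lemma N_muN n s ds : (1 <= n)%N -> size s = n -> homog A s ds ->
  N (muN N mu n s) = mu n (map N s).
Proof.
move=> hn hs hom; case: HNij => _ _ Nij; rewrite (Nij n s ds) // muN_sumS // linear_sum.
by apply: eq_big_nat => -[|k] //= _; rewrite linearZ.
Qed.

Lemma Nijenhuis_masks n s ds : (1 <= n)%N -> size s = n -> homog A s ds ->
  \sum_(b <- masks n) sgn K (count id b) *: iter (count id b) N (mu n (twist b s)) = 0.
Proof.
move=> hn hs hom; rewrite big_masks_split0 count_nseq mul0n /= scale1r twist_nseq_false //.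
rewrite -(N_muN hn hs hom) muN_masks // linear_sum (bigID (fun b => 0 < count id b)%N) /=.
rewrite [\sum_(b <- _ | ~~ _) _]big1 => [|b]; last first.
  by rewrite -eqn0Ngt /Nterm => /eqP ->; rewrite linear0.
rewrite addr0 -big_split big1 // => b; rewrite /Nterm; case: (count id b) => // c _ /=.
by rewrite linearZ /sgn /= exprS mulN1r scaleNr subrr.
Qed.

Lemma sgn_iterS c x : sgn K (1 + c)%N *: iter (1 + c) N x = - N (sgn K c *: iter c N x).
Proof. by rewrite add1n linearZ /sgn /= exprS mulN1r scaleNr. Qed.

Section Slot.
Variables (m : nat) (l1 l3 : seq V).
Hypothesis size_l : (size l1 + size l3).+1 = m.

Lemma twisted_slot_linear : linear (twisted_slot m l1 l3).
Proof.
move=> a x y; rewrite /twisted_slot scaler_sumr -big_split; apply: eq_big_seq => t1 h1.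
rewrite scaler_sumr -big_split; apply: eq_big_seq => t3 h3 /=.
have hm : (size (twist t1 l1) + size (twist t3 l3)).+1 = m.
  by rewrite !size_twist_eq ?(size_masks h1) ?(size_masks h3).
rewrite (slot_linear (mu_multilinear _) hm); last by rewrite -hm.
by rewrite linearP scalerDr !scalerA mulrC.
Qed.

Let TS : {linear V -> V} :=
  HB.pack (twisted_slot m l1 l3) (GRing.isLinear.Build K V V *:%R _ twisted_slot_linear).

Lemma twisted_slotZ a v : twisted_slot m l1 l3 (a *: v) = a *: twisted_slot m l1 l3 v.
Proof. exact: (linearZ_LR TS). Qed.

Lemma twisted_slot_sum (I : Type) (r : seq I) (P : pred I) (F : I -> V) :
  twisted_slot m l1 l3 (\sum_(j <- r | P j) F j) =
  \sum_(j <- r | P j) twisted_slot m l1 l3 (F j).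
Proof. exact: (linear_sum TS). Qed.

Lemma twisted_slot0 : twisted_slot m l1 l3 0 = 0.
Proof. exact: (linear0 TS). Qed.

Variables (d1 d3 : seq int).
Hypotheses (hom1 : homog A l1 d1) (hom3 : homog A l3 d3).

(* Split the Nijenhuis identity at l1 ++ v :: l3 along the slot: the masks keeping v
   contribute - N (twisted_slot v), those applying N to it contribute twisted_slot (N v). *)
Lemma twisted_slot_N d v : v \in A d ->
  twisted_slot m l1 l3 (N v) = N (twisted_slot m l1 l3 v).
Proof.
move=> hv; have hx : size (l1 ++ v :: l3) = m by rewrite size_cat /= addnS.
have hm : (0 < m)%N by rewrite -size_l.
apply/eqP; rewrite -subr_eq0; apply/eqP.
rewrite -[RHS](Nijenhuis_masks hm hx (homog_slot hom1 hv hom3)).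
rewrite -[m in masks m]size_l big_masks_slot /twisted_slot linear_sum -sumrB.
apply: eq_big_seq => t1 h1; rewrite linear_sum -sumrB; apply: eq_bigr => t3 _.
by rewrite !twist_cat ?(size_masks h1) // !count_cat_cons add0n sgn_iterS addrC.
Qed.

Lemma twisted_slot_iter j d v : v \in A d ->
  twisted_slot m l1 l3 (iter j N v) = iter j N (twisted_slot m l1 l3 v).
Proof.
by move=> hv; elim: j => //= j IH; rewrite (twisted_slot_N (iter_homog j hv)) IH.
Qed.

Lemma twisted_slot_Nterm lo u d v : v \in A d ->
  twisted_slot m l1 l3 (Nterm lo u v) = Nterm lo u (twisted_slot m l1 l3 v).
Proof.
move=> hv; rewrite /Nterm; case: ifP => _; last exact: twisted_slot0.
by rewrite twisted_slotZ (twisted_slot_iter _ hv).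
Qed.

End Slot.

Lemma muN_slot m l1 l3 y : (size l1 + size l3).+1 = m ->
  muN N mu m (l1 ++ y :: l3) = twisted_slot m l1 l3 y +
    \sum_(t1 <- masks (size l1)) \sum_(t3 <- masks (size l3))
      Nterm 1 (t1 ++ t3) (mu m (twist t1 l1 ++ N y :: twist t3 l3)).
Proof.
move=> size_l; have hm : (0 < m)%N by rewrite -size_l.
have hx : size (l1 ++ y :: l3) = m by rewrite size_cat /= addnS.
rewrite (muN_masks hm hx) -[m in masks m]size_l big_masks_slot.
under eq_bigr do rewrite big_split.
rewrite big_split /=; congr (_ + _); apply: eq_big_seq => t1 h1; apply: eq_bigr => t3 _.
  by rewrite twist_cat ?(size_masks h1) // /Nterm count_cat_cons.
by rewrite twist_cat ?(size_masks h1) // /Nterm count_cat_cons.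
Qed.

Lemma Nterm_cat t1 u t3 x : (0 < count id u)%N ->
  Nterm 1 (t1 ++ u ++ t3) x =
  Nterm 1 u (sgn K (count id (t1 ++ t3)) *: iter (count id (t1 ++ t3)) N x).
Proof.
have E : count id (t1 ++ u ++ t3) = (count id u + count id (t1 ++ t3))%N.
  by rewrite !count_cat addnCA.
rewrite /Nterm E; case: (count id u) => // c _ /=.
by rewrite linearZ /= scalerA -iterD /sgn /= -exprD.
Qed.

Section Composite.
Variables (s : seq V) (ds : seq int) (i n : nat).
Hypotheses (hom : homog A s ds) (i_gt0 : (0 < i)%N) (n_gt0 : (0 < n)%N).
Hypothesis size_s : (i.-1 + n <= size s)%N.
Local Notation l1 := (take i.-1 s).
Local Notation l3 := (drop (i.-1 + n) s).
Local Notation sm := (mid s i n).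
Local Notation m := ((size s).+1 - n)%N.

Let size_l : (size l1 + size l3).+1 = m.
Proof. by rewrite size_takel ?size_drop; lia. Qed.

Let size_l1 : size l1 = i.-1.
Proof. by rewrite size_takel //; lia. Qed.

Let hom1 : homog A l1 (take i.-1 ds). Proof. exact: homog_take. Qed.
Let hom3 : homog A l3 (drop (i.-1 + n) ds). Proof. exact: homog_drop. Qed.
Let size_sm : size sm = n. Proof. exact: size_mid. Qed.
Let hom_sm : homog A sm (take n (drop i.-1 ds)). Proof. exact: homog_mid. Qed.

Let twist_sm_homog u : u \in masks n ->
  mu n (twist u sm) \in A (\sum_(d <- take n (drop i.-1 ds)) d + (n%:Z - 2)).
Proof.
move=> hu; have hus : size u = size sm by rewrite size_sm (size_masks hu).
by apply: mu_degree => //; [rewrite size_twist_eq | apply: homog_twist N_homog hus hom_sm].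
Qed.

Lemma twisted_slot_muN : twisted_slot m l1 l3 (muN N mu n sm) =
  \sum_(u <- masks n | (0 < count id u)%N)
    Nterm 1 u (twisted_slot m l1 l3 (mu n (twist u sm))).
Proof.
rewrite muN_masks // (twisted_slot_sum size_l) big_masks_split0 Nterm_nseq.
rewrite (twisted_slot0 size_l).
rewrite add0r big_seq_cond [RHS]big_seq_cond; apply: eq_bigr => u /andP[hu _].
exact: (twisted_slot_Nterm size_l hom1 hom3 _ _ (twist_sm_homog hu)).
Qed.

Lemma big_masks_ins :
  \sum_(b <- masks (size s)) Nterm 1 b (mu m (ins (twist b s) i n (mu n (mid (twist b s) i n)))) =
  \sum_(t1 <- masks (size l1)) \sum_(t3 <- masks (size l3))
     Nterm 1 (t1 ++ t3) (mu m (twist t1 l1 ++ mu n (map N sm) :: twist t3 l3)) +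
  \sum_(u <- masks n | (0 < count id u)%N)
    Nterm 1 u (twisted_slot m l1 l3 (mu n (twist u sm))).
Proof.
have -> : masks (size s) = masks (size l1 + (n + size l3)).
  by rewrite size_l1 size_drop; congr masks; lia.
rewrite big_masks_cat.
transitivity (\sum_(t1 <- masks (size l1)) \sum_(u <- masks n) \sum_(t3 <- masks (size l3))
    Nterm 1 (t1 ++ u ++ t3) (mu m (twist t1 l1 ++ mu n (twist u sm) :: twist t3 l3))).
  apply: eq_big_seq => t1 h1; rewrite big_masks_cat; apply: eq_big_seq => u hu.
  have ht1 : size t1 = i.-1 by rewrite (size_masks h1).
  by apply: eq_bigr => t3 _; rewrite (ins_twist N size_s) ?(mid_twist N size_s) ?(size_masks hu).
under eq_bigr => t1 _ do rewrite big_masks_split0.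
rewrite big_split /=; congr (_ + _).
  apply: eq_bigr => t1 _; apply: eq_bigr => t3 _.
  by rewrite twist_nseq_false // /Nterm !count_cat count_nseq mul0n.
rewrite exchange_big /= big_seq_cond [RHS]big_seq_cond; apply: eq_bigr => u /andP[_ hu].
rewrite /twisted_slot linear_sum; apply: eq_bigr => t1 _.
by rewrite linear_sum; apply: eq_bigr => t3 _; apply: Nterm_cat.
Qed.

Lemma muN_comp : muN N mu m (ins s i n (muN N mu n sm)) =
  \sum_(b <- masks (size s)) Nterm 1 b (mu m (ins (twist b s) i n (mu n (mid (twist b s) i n)))).
Proof.
rewrite big_masks_ins /ins (muN_slot _ size_l) (N_muN n_gt0 size_sm hom_sm).
by rewrite twisted_slot_muN addrC.
Qed.

Let i_le_m : (i <= m)%N. Proof. by lia. Qed.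

Let size_ins_m y : size (ins s i n y) = m.
Proof. by rewrite size_ins //; lia. Qed.

Let gv_etaN j x : (1 <= j <= m)%N -> gv (etaN N mu) m j x = etaN N mu m j x.
Proof. by move=> hj; rewrite gv_in // /nidx; case: eqP; lia. Qed.

Local Notation eps := (sgn K (n%:Z * dsum ds i.-1)).
Local Notation comp_at b := (mu m (ins (twist b s) i n (mu n (mid (twist b s) i n)))).

Lemma compi_etaN_lt r : (1 <= r < i)%N ->
  compi (etaN N mu) m n i r s ds = eps *: comp_at (unit_mask (size s) r).
Proof.
move=> /andP[r_gt0 r_lt_i]; have hr : (1 <= r <= i.-1)%N by rewrite r_gt0 -ltnS prednK.
have E1 : unit_mask m r = unit_mask i.-1 r ++ false :: nseq (m - i) false.
  by rewrite -[false :: _]/(nseq (m - i).+1 false) -unit_mask_catr //; congr unit_mask; lia.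
have E2 : unit_mask (size s) r = unit_mask i.-1 r ++ nseq n false ++ nseq (m - i) false.
  by rewrite -nseqD -unit_mask_catr //; congr unit_mask; lia.
have hrm : (1 <= r <= m)%N by lia.
rewrite compi_lt // gv_etaN // gstar_etaN // etaN_unit ?size_ins_m //.
rewrite E1 E2 (twist_ins_split N size_s _ _ _ (size_unit_mask hr) (size_nseq n false)).
rewrite (mid_twist N size_s _ (size_unit_mask hr) (size_nseq n false)) twist_nseq_false //.
by rewrite (N_muN n_gt0 size_sm hom_sm).
Qed.

Lemma compi_etaN_mid r : (i <= r < i + n)%N ->
  compi (etaN N mu) m n i r s ds = eps *: comp_at (unit_mask (size s) r).
Proof.
move=> hr; have hr' : (1 <= r - i + 1 <= n)%N by lia.
have E : unit_mask (size s) r =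
    nseq i.-1 false ++ unit_mask n (r - i + 1) ++ nseq (m - i) false.
  by rewrite -unit_mask_catr // -unit_mask_catl; try congr unit_mask; lia.
have him : (1 <= i <= m)%N by rewrite i_gt0 i_le_m.
have hrn : (1 <= r - i + 1 <= nidx n)%N by rewrite /nidx; case: eqP; lia.
rewrite compi_mid // gv_etaN // (gv_in _ _ hrn) !etaN_unit ?size_ins_m ?size_sm //.
rewrite E (twist_ins_split N size_s _ _ _ (size_nseq i.-1 false) (size_unit_mask hr')).
by rewrite (mid_twist N size_s _ (size_nseq i.-1 false) (size_unit_mask hr')).
Qed.

Lemma compi_etaN_gt r : (i + n <= r <= size s)%N ->
  compi (etaN N mu) m n i r s ds = eps *: comp_at (unit_mask (size s) r).
Proof.
move=> hr; have hrm : (1 <= r - n + 1 <= m)%N by lia.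
have E1 : unit_mask m (r - n + 1) =
    nseq i.-1 false ++ false :: unit_mask (m - i) (r - n + 1 - i).
  by rewrite -[false :: _]/(nseq 1 false ++ _) -!unit_mask_catl; try congr unit_mask; lia.
have E2 : unit_mask (size s) r =
    nseq i.-1 false ++ nseq n false ++ unit_mask (m - i) (r - n + 1 - i).
  by rewrite -!unit_mask_catl; try congr unit_mask; lia.
have hr2 : (i + n <= r < m + n)%N by lia.
rewrite compi_gt // gv_etaN // gstar_etaN // etaN_unit ?size_ins_m // E1 E2.
rewrite (twist_ins_split N size_s _ _ _ (size_nseq i.-1 false) (size_nseq n false)).
rewrite (mid_twist N size_s _ (size_nseq i.-1 false) (size_nseq n false)) twist_nseq_false //.
by rewrite (N_muN n_gt0 size_sm hom_sm).
Qed.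

Lemma compi_etaN_unit r : (1 <= r <= size s)%N ->
  compi (etaN N mu) m n i r s ds = eps *: comp_at (unit_mask (size s) r).
Proof.
move=> hr; case: (ltnP r i) => [r_lt_i | i_le_r]; first by apply: compi_etaN_lt; lia.
by case: (ltnP r (i + n)) => h; [apply: compi_etaN_mid | apply: compi_etaN_gt]; lia.
Qed.

End Composite.

Lemma multilinear_muN n : (1 <= n)%N -> multilinear n (muN N mu n).
Proof. by move=> hn; apply: multilinear_ext (multilinear_masks 1 hn) _ => s; apply: muN_masks. Qed.

Lemma has_degree_muN n : (1 <= n)%N -> has_degree A n (n%:Z - 2) (muN N mu n).
Proof. by move=> hn; apply: has_degree_ext (has_degree_masks 1 hn) _ => s; apply: muN_masks. Qed.

Lemma multilinear_etaN n r : (1 <= n)%N -> (1 <= r <= nidx n)%N ->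
  multilinear n (etaN N mu n r).
Proof.
move=> hn /(mem_nidx hn) [hr | [hn2 ->]].
  by apply: multilinear_ext (multilinear_twist hn (size_unit_mask hr)) _ => s; apply: etaN_unit.
by apply: multilinear_ext (multilinear_masks 2 hn) _ => s; apply: etaN_last.
Qed.

Lemma has_degree_etaN n r : (1 <= n)%N -> (1 <= r <= nidx n)%N ->
  has_degree A n (n%:Z - 2) (etaN N mu n r).
Proof.
move=> hn /(mem_nidx hn) [hr | [hn2 ->]].
  by apply: has_degree_ext (has_degree_twist hn (size_unit_mask hr)) _ => s; apply: etaN_unit.
by apply: has_degree_ext (has_degree_masks 2 hn) _ => s; apply: etaN_last.
Qed.

Lemma Ainf_muN : Ainf A (muN N mu).
Proof.
split=> [n|n|k s ds hk hs hom]; [exact: multilinear_muN | exact: has_degree_muN | subst k].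
transitivity (\sum_(b <- masks (size s)) \sum_(1 <= n < (size s).+1)
    \sum_(1 <= i < ((size s).+1 - n).+1) Nterm 1 b
      (sgn K ((i * n.+1)%N%:Z + n%:Z * dsum ds i.-1) *: mu ((size s).+1 - n)%N
         (ins (twist b s) i n (mu n (mid (twist b s) i n))))).
  rewrite exchange_big; apply: eq_big_nat => n hn; rewrite exchange_big; apply: eq_big_nat => i hi.
  rewrite (muN_comp hom); try lia.
  by rewrite scaler_sumr; apply: eq_bigr => b _; rewrite linearZ.
rewrite big_seq big1 // => b hb; have hbs := size_masks hb.
have := congr1 (Nterm 1 b) (mu_rel hk (size_twist_eq N hbs) (homog_twist N_homog hbs hom)).
rewrite linear0 linear_sum => E; apply: etrans E; apply: eq_bigr => n _.
by rewrite linear_sum.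
Qed.

Lemma NS_rel_unit k r s ds : (1 <= r <= k)%N -> size s = k -> homog A s ds ->
  \sum_(1 <= n < k.+1) \sum_(1 <= i < (k.+1 - n).+1)
     sgn K ((i * n.+1)%N%:Z) *: compi (etaN N mu) (k.+1 - n) n i r s ds = 0.
Proof.
move=> hr hs hom; subst k; have hu := size_unit_mask hr.
have hk : (0 < size s)%N by case/andP: hr => /leq_trans; apply.
apply: etrans (mu_rel hk (size_twist_eq N hu) (homog_twist N_homog hu hom)).
apply: eq_big_nat => n hn; apply: eq_big_nat => i hi.
by rewrite (compi_etaN_unit hom) ?scalerA -?sgnD //; lia.
Qed.

Lemma NS_rel_last k s ds : (2 <= k)%N -> size s = k -> homog A s ds ->
  \sum_(1 <= n < k.+1) \sum_(1 <= i < (k.+1 - n).+1)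
     sgn K ((i * n.+1)%N%:Z) *: compi (etaN N mu) (k.+1 - n) n i k.+1 s ds = 0.
Proof.
move=> hk hs hom.
pose R r := \sum_(1 <= n < k.+1) \sum_(1 <= i < (k.+1 - n).+1)
  sgn K ((i * n.+1)%N%:Z) *: compi (etaN N mu) (k.+1 - n) n i r s ds.
have R_unit : \sum_(1 <= r < k.+1) R r = 0.
  by rewrite big_nat_cond big1 // => r /andP[hr _]; apply: NS_rel_unit hs hom.
have R_all : \sum_(1 <= r < k.+2) R r = 0.
  case: Ainf_muN => _ _ /(_ k s ds) rel; apply: etrans (rel _ hs hom); last by lia.
  rewrite exchange_big; apply: eq_big_nat => n hn; rewrite exchange_big; apply: eq_big_nat => i hi.
  have [n_gt0 i_gt0 i_le_m] : [/\ 0 < n, 0 < i & i <= k.+1 - n]%N by split; lia.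
  have hs' : size s = ((k.+1 - n) + n).-1 by lia.
  have hml : multilinear (k.+1 - n) (etaN N mu (k.+1 - n) i).
    by apply: multilinear_etaN; rewrite /nidx; try case: eqP; lia.
  rewrite -scaler_sumr (_ : k.+2 = ((k.+1 - n) + n).+1); last by lia.
  have hmid : size (mid s i n) = n by rewrite size_mid //; lia.
  have hins y : size (ins s i n y) = (k.+1 - n)%N by rewrite size_ins; lia.
  have hm0 : (0 < k.+1 - n)%N by lia.
  by rewrite big_compi // scalerA -sgnD (gstar_etaN n_gt0 hmid) (gstar_etaN hm0 (hins _)).
by move: R_all; rewrite big_nat_recr //= R_unit add0r.
Qed.

Lemma NSinf_etaN : NSinf A (etaN N mu).
Proof.
split=> [n r|n r|k r s ds hk hr hs hom]; [exact: multilinear_etaN | exact: has_degree_etaN |].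
case: (mem_nidx hk hr) => [hr' | [hk2 ->]]; first exact: NS_rel_unit hs hom.
exact: NS_rel_last hs hom.
Qed.

End Nijenhuis.

End Expansion.

Unset Implicit Arguments.

Theorem theorem6p14 (K : fieldType) (V : lmodType K) (A : int -> {pred V})
  (mu : nat -> seq V -> V) (N : V -> V) :
  [pchar K] =i pred0 ->
  graded A ->
  Ainf A mu ->
  strict_homotopy_Nijenhuis N A mu ->
  NSinf A (etaN N mu) /\ Ainf A (muN N mu).
Proof.
(* No division by an integer occurs. *)
move=> _ A_graded mu_Ainf HNij; have N_linear : linear N by case: HNij.
by split; [exact: NSinf_etaN | exact: Ainf_muN].
Qed.
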